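(* Let $k$ be a finite field of odd characteristic, $A$ a finite $k$-algebra with involution $*$ fixing $k$ pointwise, $(S,\eta)$ a self-dual $A$-module, $W=S\oplus S$ with symplectic form $B$ and $\chi=\psi\circ B$, and let $\mathcal L$, $\mathcal E_L$ be as in the context. For $L,L'\in\mathcal L$ define $\gamma_{L',L}$ on $\mathcal E_L$ by $$(\gamma_{L',L}f)(w)=\frac{1}{\sqrt{|L|\,|L\cap L'|}}\sum_{\zeta'\in L'}\overline{\chi(w,\zeta')}\,f(w+\zeta')\qquad(f\in\mathcal E_L,\ w\in W).$$ Then $\gamma_{L',L}$ maps $\mathcal E_L$ into $\mathcal E_{L'}$, and for all $L,L',L''\in\mathcal L$: (a) $\langle\gamma_{L',L}f,h\rangle=\langle f,\gamma_{L,L'}h\rangle$ for $f\in\mathcal E_L$, $h\in\mathcal E_{L'}$; (b) $\langle\gamma_{L',L}f,\gamma_{L',L}h\rangle=\langle f,h\rangle$ for $f,h\in\mathcal E_L$; (c) $\gamma_{L,L'}\circ\gamma_{L',L}=\gamma_{L,L}=\mathrm{id}_{\mathcal E_L}$; (d) $\gamma_{L'',L'}\circ\gamma_{L',L}=\mu(L'',L',L)\,\gamma_{L'',L}$, where $$\mu(L'',L',L)=\sqrt{\frac{|L''\cap L'|}{|L\cap L''|\,|L'\cap L|\,|L|}}\;S_W(L;L',L''),\qquad S_W(L;L',L'')=\sum_{\zeta\in L\cap(L'+L'')}\chi(\zeta',\zeta''),$$ in which each $\zeta\in L\cap(L'+L'')$ is written as $\zeta=\zeta'+\zeta''$ with $\zeta'\in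 L'$, $\zeta''\in L''$ (the summand does not depend on this choice); (e) $\tau_g\circ\gamma_{L',L}=\gamma_{gL',gL}\circ\tau_g$ for every $g\in G$. Consequently $\Gamma=\{\gamma_{L',L}\}$ is a $G$-equivariant connection on the Lagrangian bundle with multiplier $\mu$.
   Context: A self-dual $A$-module is a left $A$-module $S$, finite-dimensional over $k$, together with a non-degenerate, $k$-bilinear, symmetric, $A$-balanced pairing $\eta:S\times S\to k$ ($A$-balanced: $\eta(a^*s,t)=\eta(s,at)$ for $a\in A$, $s,t\in S$). $S$ is a right $A$-module via $s.a=a^*s$, and $W=S\oplus S$ is a right $A$-module componentwise. $B((s,t),(s',t'))=\eta(s,t')-\eta(t,s')$ is a non-degenerate symplectic $k$-form on $W$. Fix a non-trivial character $\psi$ of $(k,+)$ and put $\chi(u,v)=\psi(B(u,v))$ for $u,v\in W$. A Lagrangian is a right $A$-submodule $L\subseteq W$ with $L=L^\perp$ (orthogonal with respect to $B$); $\mathcal L$ is the set of Lagrangians. For $L\in\mathcal L$, $\mathcal E_L=\{f:W\to\mathbb C\mid f(w+\zeta)=\chi(w,\zeta)f(w)\ \forall w\in W,\zeta\in L\}$ with inner product $\langle f,h\rangle=\sum_{w\in W}f(w)\overline{h(w)}$. $G=SL_*(2,A)$ (matrices $\begin{pmatrix}a&b\\c&d\end{pmatrix}$ over $A$ with $ab^*=ba^*$, $cd^*=dc^*$, $a^*c=c^*a$, $b^*d=d^*b$, $ad^*-bc^*=a^*d-c^*b=1$) acts on $W$, written $w\mapsto gw$, either by $gw=g.w$ (matrix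 times column vector, $g.(s,t)=(as+bt,cs+dt)$) or by $gw=w.g^{-1}$ (row vector times matrix); this action preserves $B$, and it is assumed (as in the paper) to map Lagrangians to Lagrangians, $gL=\{gw:w\in L\}$. The action on functions is $(\tau_gf)(w)=f(g^{-1}w)$, so $\tau_g:\mathcal E_L\to\mathcal E_{gL}$. *)

From HB Require Import structures.
From mathcomp Require Import all_boot all_order all_algebra all_field.
Set Implicit Arguments. Unset Strict Implicit. Unset Printing Implicit Defensive.
Import Order.TTheory GRing.Theory Num.Theory.
Local Open Scope ring_scope.

(* Conventions:
   - k : finFieldType, A : finAlgType k (a finite k-algebra, possibly
     non-commutative), star : A -> A the involution.
   - S : finLmodType A is the left A-module S (finite, hence finite-dim over k;
     k acts through c%:A).  eta : S -> S -> k.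
   - W := S * S, with componentwise zmodType structure.
   - psi : k -> algC is the additive character (values in algebraic complex
     numbers, which contain all character values). *)

Section Weil.
Variables (k : finFieldType) (A : finAlgType k) (star : A -> A).
Variable (S : finLmodType A).
Variable (eta : S -> S -> k).
Variable (psi : k -> algC).

Definition is_involution : Prop :=
  [/\ forall x y : A, star (x + y) = star x + star y,
      forall x y : A, star (x * y) = star y * star x,
      forall x : A, star (star x) = x
    & forall c : k, star (c%:A) = c%:A].

Definition self_dual : Prop :=
  (forall s s' t : S, eta (s + s') t = eta s t + eta s' t) /\
  (forall s t t' : S, eta s (t + t') = eta s t + eta s t') /\
  (forall (c : k) (s t : S), eta (c%:A *: s) t = c * eta s t) /\
  (forall (c : k) (s t : S), eta s (c%:A *: t) = c * eta s t) /\
  (forall s t : S, eta s t = eta t s) /\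
  (forall s : S, (forall t : S, eta s t = 0) -> s = 0) /\
  (forall (a : A) (s t : S), eta (star a *: s) t = eta s (a *: t)).

Definition nontrivial_character : Prop :=
  [/\ forall x y : k, psi (x + y) = psi x * psi y,
      forall x : k, psi x != 0
    & exists x : k, psi x != 1].

Definition W := (S * S)%type.

(* right A-module structure s.a = a^* s, componentwise *)
Definition ract (w : W) (a : A) : W := (star a *: w.1, star a *: w.2).

Definition B (u v : W) : k := eta u.1 v.2 - eta u.2 v.1.

Definition chi (u v : W) : algC := psi (B u v).

Definition orth (L : {set W}) : {set W} :=
  [set w : W | [forall z in L, B w z == 0]].

Definition right_submodule (L : {set W}) : bool :=
  [&& (0 : W) \in L,
      [forall u in L, forall v in L, u + v \in L]
    & [forall u in L, forall a : A, ract u a \in L]].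

Definition lagrangian (L : {set W}) : bool :=
  right_submodule L && (L == orth L).

Definition in_EL (L : {set W}) (f : W -> algC) : Prop :=
  forall w z : W, z \in L -> f (w + z) = chi w z * f w.

Definition ip (f h : W -> algC) : algC := \sum_(w : W) f w * (h w)^*.

Definition gamma (L' L : {set W}) (f : W -> algC) (w : W) : algC :=
  (sqrtC ((#|L| * #|L :&: L'|)%:R))^-1 *
    \sum_(z in L') (chi w z)^* * f (w + z).

Definition sumset (L' L'' : {set W}) : {set W} :=
  [set z : W | [exists p : W * W, [&& p.1 \in L', p.2 \in L'' & z == p.1 + p.2]]].

Definition SW_term (L' L'' : {set W}) (z : W) : algC :=
  if [pick p : W * W | [&& p.1 \in L', p.2 \in L'' & z == p.1 + p.2]] is Some p
  then chi p.1 p.2 else 0.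

Definition SW (L L' L'' : {set W}) : algC :=
  \sum_(z in L :&: sumset L' L'') SW_term L' L'' z.

Definition mu (L'' L' L : {set W}) : algC :=
  sqrtC (#|L'' :&: L'|%:R / (#|L :&: L''| * #|L' :&: L| * #|L|)%:R)
    * SW L L' L''.

Definition m11 (g : 'M[A]_2) := g ord0 ord0.
Definition m12 (g : 'M[A]_2) := g ord0 ord_max.
Definition m21 (g : 'M[A]_2) := g ord_max ord0.
Definition m22 (g : 'M[A]_2) := g ord_max ord_max.

Definition SLstar (g : 'M[A]_2) : Prop :=
  let a := m11 g in let b := m12 g in let c := m21 g in let d := m22 g in
  [/\ a * star b = b * star a, c * star d = d * star c,
      star a * c = star c * a, star b * d = star d * b &
      a * star d - b * star c = 1 /\ star a * d - star c * b = 1].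

(* matrix [[a,b],[c,d]] times column vector (s,t) *)
Definition matL (a b c d : A) (w : W) : W :=
  (a *: w.1 + b *: w.2, c *: w.1 + d *: w.2).
(* row vector (s,t) times matrix [[a,b],[c,d]], with s.x = x^* s *)
Definition matR (a b c d : A) (w : W) : W :=
  (star a *: w.1 + star c *: w.2, star b *: w.1 + star d *: w.2).

(* For g = [[a,b],[c,d]] in SL_*(2,A), g^{-1} = [[d^*,-b^*],[-c^*,a^*]]. *)
(* action 1: g w = g.w ; action 2: g w = w.g^{-1} *)
Definition act1 (g : 'M[A]_2) (w : W) : W := matL (m11 g) (m12 g) (m21 g) (m22 g) w.
Definition act1inv (g : 'M[A]_2) (w : W) : W :=
  matL (star (m22 g)) (- star (m12 g)) (- star (m21 g)) (star (m11 g)) w.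
Definition act2 (g : 'M[A]_2) (w : W) : W :=
  matR (star (m22 g)) (- star (m12 g)) (- star (m21 g)) (star (m11 g)) w.
Definition act2inv (g : 'M[A]_2) (w : W) : W := matR (m11 g) (m12 g) (m21 g) (m22 g) w.

Definition tau (ginv : W -> W) (f : W -> algC) (w : W) : algC := f (ginv w).

Definition equivariant (act actinv : 'M[A]_2 -> W -> W) : Prop :=
  (forall g, SLstar g -> forall L, lagrangian L -> lagrangian (act g @: L)) ->
  forall g, SLstar g ->
  forall L L', lagrangian L -> lagrangian L' ->
  forall f, in_EL L f ->
  forall w, tau (actinv g) (gamma L' L f) w
            = gamma (act g @: L') (act g @: L) (tau (actinv g) f) w.

End Weil.

From Pilot Require Import Defs.
From HB Require Import structures.
From mathcomp Require Import all_boot all_order all_algebra all_field ring.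
Set Implicit Arguments. Unset Strict Implicit. Unset Printing Implicit Defensive.
Import Order.TTheory GRing.Theory Num.Theory.
Local Open Scope ring_scope.

(* Everything reduces to orthogonality of characters: for a k-subspace M of W,
   sum_(z in M) chi w z is #|M| or 0 according as w is or is not in orth M,
   because psi is non-trivial and M is stable under scaling by k.  Counting gives
   #|M| * #|orth M| = #|W|, hence orth (orth M) = M, all Lagrangians have the same
   size and orth (L :&: L') = L + L'.  The adjunction (a) is the change of
   variables w -> w + z.  For (d), the double sum defining gamma_{L'',L'}
   gamma_{L',L} f splits into slices indexed by a in L'; a slice vanishes unless
   a lies in L + L'' (this uses that 2 is invertible in k), and otherwise it is
   chi(a, b) times the sum defining gamma_{L'',L} f, for any b in L'' with
   a + b in L.  Counting such b produces S_W(L; L', L''), and the normalising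
   constants combine into mu.  Then (b) and (c) follow from (a), (d) and
   mu(L, L', L) = 1, and (e) holds because each action is an additive bijection
   of W whose inverse is its adjoint for B. *)

(* Compares the normalisations of gamma_{L'',L'} gamma_{L',L} and of
   mu(L'',L',L) gamma_{L'',L}, with N = #|L|, a = #|L' :&: L''|,
   b = #|L :&: L'| and c = #|L :&: L''|. *)
Lemma sqrtC_normalization (N a b c : algC) : 0 < N -> 0 < a -> 0 < b -> 0 < c ->
  (sqrtC (N * a))^-1 * (sqrtC (N * b))^-1 * (a / c)
  = sqrtC (a / (c * b * N)) * (sqrtC (N * c))^-1.
Proof.
move=> N_gt0 a_gt0 b_gt0 c_gt0.
have sqrtV_ge0 (x y : algC) : 0 < x -> 0 < y -> 0 <= (sqrtC (x * y))^-1.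
  by move=> x_gt0 y_gt0; rewrite invr_ge0 sqrtC_ge0 mulr_ge0 ?ltW.
rewrite -[LHS]sqrCK; last first.
  by apply: mulr_ge0; [apply: mulr_ge0; apply: sqrtV_ge0 | apply: divr_ge0; apply: ltW].
rewrite -[RHS]sqrCK; last first.
  apply: mulr_ge0; [rewrite sqrtC_ge0 | exact: sqrtV_ge0].
  by apply: divr_ge0; [exact: ltW | rewrite !mulr_ge0 ?ltW].
congr sqrtC; rewrite !exprMn !exprVn !sqrtCK.
by field; apply/and4P; split; apply: lt0r_neq0.
Qed.

Section WeilConnection.
Variables (k : finFieldType) (A : finAlgType k) (star : A -> A).
Variables (S : finLmodType A) (eta : S -> S -> k) (psi : k -> algC).
Hypothesis Hstar : is_involution star.
Hypothesis Heta : self_dual star eta.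
Hypothesis Hpsi : nontrivial_character psi.

Local Notation W := (Defs.W S).
Local Notation B := (Defs.B eta).
Local Notation chi := (Defs.chi eta psi).
Local Notation orth := (Defs.orth eta).
Local Notation lagrangian := (Defs.lagrangian star eta).
Local Notation in_EL := (Defs.in_EL eta psi).
Local Notation gamma := (Defs.gamma eta psi).
Local Notation SW := (Defs.SW eta psi).
Local Notation mu := (Defs.mu eta psi).
Local Notation SW_term := (Defs.SW_term eta psi).
Local Notation matL := (@Defs.matL _ _ S).
Local Notation act1 := (@Defs.act1 _ _ S).
Local Notation act1inv := (@Defs.act1inv _ _ star S).
Local Notation act2 := (@Defs.act2 _ _ star S).
Local Notation act2inv := (@Defs.act2inv _ _ star S).

Lemma starD x y : star (x + y) = star x + star y. Proof. by case: Hstar. Qed.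
Lemma starM x y : star (x * y) = star y * star x. Proof. by case: Hstar. Qed.
Lemma starK x : star (star x) = x. Proof. by case: Hstar. Qed.
Lemma star_scalar c : star c%:A = c%:A. Proof. by case: Hstar. Qed.
Lemma star1 : star 1 = 1. Proof. by have := star_scalar 1; rewrite scale1r. Qed.
Lemma starN x : star (- x) = - star x.
Proof.
apply/eqP; rewrite -addr_eq0 -starD addNr.
by have := star_scalar 0; rewrite scale0r => ->.
Qed.

Lemma etaDl s s' t : eta (s + s') t = eta s t + eta s' t.
Proof. by case: Heta => ->. Qed.
Lemma etaDr s t t' : eta s (t + t') = eta s t + eta s t'.
Proof. by case: Heta => _ [->]. Qed.
Lemma etaZl c s t : eta (c%:A *: s) t = c * eta s t.
Proof. by case: Heta => _ [_ [->]]. Qed.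
Lemma etaZr c s t : eta s (c%:A *: t) = c * eta s t.
Proof. by case: Heta => _ [_ [_ [->]]]. Qed.
Lemma etaC s t : eta s t = eta t s.
Proof. by case: Heta => _ [_ [_ [_ [->]]]]. Qed.
Lemma eta_nondeg s : (forall t, eta s t = 0) -> s = 0.
Proof. by case: Heta => _ [_ [_ [_ [_ [nd _]]]]]; apply: nd. Qed.
Lemma eta_balanced a s t : eta (star a *: s) t = eta s (a *: t).
Proof. by case: Heta => _ [_ [_ [_ [_ [_ ->]]]]]. Qed.

Lemma scalar_N1 (v : S) : (-1)%:A *: v = - v. Proof. by rewrite !scaleN1r. Qed.

Lemma eta0l t : eta 0 t = 0.
Proof. by apply/(addrI (eta 0 t)); rewrite -etaDl !addr0. Qed.
Lemma etaNr s t : eta s (- t) = - eta s t.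
Proof. by rewrite -scalar_N1 etaZr mulN1r. Qed.

Definition kscale (c : k) (w : W) : W := (c%:A *: w.1, c%:A *: w.2).

Lemma kscaleD c u v : kscale c (u + v) = kscale c u + kscale c v.
Proof. by rewrite /kscale /= !scalerDr. Qed.
Lemma kscaleN1 u : kscale (-1) u = - u.
Proof. by case: u => s t; rewrite /kscale /= !scalar_N1. Qed.

Lemma BDl u u' v : B (u + u') v = B u v + B u' v.
Proof. by rewrite /B /= !etaDl opprD addrACA. Qed.
Lemma BDr u v v' : B u (v + v') = B u v + B u v'.
Proof. by rewrite /B /= !etaDr opprD addrACA. Qed.
Lemma BZl c u v : B (kscale c u) v = c * B u v.
Proof. by rewrite /B /= !etaZl mulrBr. Qed.
Lemma BZr c u v : B u (kscale c v) = c * B u v.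
Proof. by rewrite /B /= !etaZr mulrBr. Qed.
Lemma BNl u v : B (- u) v = - B u v.
Proof. by rewrite -kscaleN1 BZl mulN1r. Qed.
Lemma B0l v : B 0 v = 0.
Proof. by apply/(addrI (B 0 v)); rewrite -BDl !addr0. Qed.
Lemma B_anti u v : B v u = - B u v.
Proof. by rewrite /B opprB (etaC v.1) (etaC v.2). Qed.
Lemma B_alt u : B u u = 0.
Proof. by rewrite /B etaC subrr. Qed.
Lemma B_nondeg v : (forall u, B u v = 0) -> v = 0.
Proof.
case: v => s t Bv0; congr (_, _); apply: eta_nondeg => x; rewrite etaC.
- by apply/eqP; rewrite -oppr_eq0 -(Bv0 (0, x)) /B /= eta0l sub0r.
- by rewrite -(Bv0 (x, 0)) /B /= eta0l subr0.
Qed.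

(** * The character chi *)

Lemma psiD x y : psi (x + y) = psi x * psi y. Proof. by case: Hpsi. Qed.
Lemma psi_neq0 x : psi x != 0. Proof. by case: Hpsi. Qed.
Lemma psi0 : psi 0 = 1.
Proof. by apply: (mulfI (psi_neq0 0)); rewrite -psiD !addr0 mulr1. Qed.

(* psi x is a p-th root of unity, p = char k. *)
Lemma norm_psi x : `|psi x| = 1.
Proof.
have [p p_pr pcharp] := finPcharP k.
have : psi x ^+ p = 1.
  rewrite -psi0 -(mulrn_pchar pcharp x); elim: p {p_pr pcharp} => [|p IHp].
    by rewrite psi0.
  by rewrite exprS mulrS psiD IHp.
move/(congr1 Num.norm); rewrite normrX normr1 => /eqP.
by rewrite pexpr_eq1 ?prime_gt0 // => /eqP.
Qed.

Lemma conj_psi x : (psi x)^* = psi (- x).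
Proof.
apply: (mulfI (psi_neq0 x)); rewrite -psiD subrr psi0.
by rewrite -normCK norm_psi expr1n.
Qed.

Lemma chiDl u u' v : chi (u + u') v = chi u v * chi u' v.
Proof. by rewrite /chi BDl psiD. Qed.
Lemma chiDr u v v' : chi u (v + v') = chi u v * chi u v'.
Proof. by rewrite /chi BDr psiD. Qed.
Lemma conj_chi u v : (chi u v)^* = chi v u.
Proof. by rewrite /chi conj_psi -B_anti. Qed.
Lemma conj_chiK u v : (chi u v)^* * chi u v = 1.
Proof. by rewrite /chi conj_psi -psiD addNr psi0. Qed.
Lemma chi_eq1 u v : B u v = 0 -> chi u v = 1.
Proof. by rewrite /chi => ->; rewrite psi0. Qed.

(** * Subspaces, orthogonality and Lagrangians *)

Definition ksubspace (M : {set W}) : Prop :=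
  [/\ 0 \in M, {in M &, forall u v, u + v \in M}
    & forall c, {in M, forall u, kscale c u \in M}].

Section KSubspace.
Variable M : {set W}.
Hypothesis M_ksub : ksubspace M.

Lemma ksub0 : 0 \in M. Proof. by case: M_ksub. Qed.
Lemma ksubD u v : u \in M -> v \in M -> u + v \in M.
Proof. by case: M_ksub => _ MD _; apply: MD. Qed.
Lemma ksubZ c u : u \in M -> kscale c u \in M.
Proof. by case: M_ksub => _ _ MZ; apply: MZ. Qed.
Lemma ksubN u : (- u \in M) = (u \in M).
Proof. by apply/idP/idP => Mu; [rewrite -[u]opprK |]; rewrite -kscaleN1 ksubZ. Qed.
Lemma ksubDr u v : v \in M -> (u + v \in M) = (u \in M).
Proof.
move=> Mv; apply/idP/idP => [Muv | Mu]; last exact: ksubD.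
by rewrite -(addrK v u) ksubD ?ksubN.
Qed.

Lemma natr_card_ksub_gt0 : 0 < #|M|%:R :> algC.
Proof. by rewrite ltr0n; apply/card_gt0P; exists 0; apply: ksub0. Qed.

(* Translating z by some z1 in M with psi (B w z1) <> 1 multiplies the sum by
   psi (B w z1), so the sum vanishes. *)
Lemma sum_chi_ksub w :
  \sum_(z in M) chi w z = if w \in orth M then #|M|%:R else 0.
Proof.
rewrite inE; case: ifP => [/forall_inP wM0 | /negbT/forall_inPn[z0 Mz0 Bwz0]].
  by rewrite -sumr_const; apply: eq_bigr => z Mz; apply/chi_eq1/eqP/wM0.
have [_ _ [x psix]] := Hpsi; pose z1 := kscale (x / B w z0) z0.
have Bwz1 : B w z1 = x by rewrite BZr divfK.
have Mz1 : z1 \in M by apply: ksubZ.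
set s := \sum_(z in M) _; have : s * chi w z1 = s.
  rewrite big_distrl [RHS](reindex_inj (addIr z1)) /=.
  by apply: eq_big => [z | z _]; rewrite ?ksubDr ?chiDr.
move/eqP; rewrite -subr_eq0 -{2}[s]mulr1 -mulrBr mulf_eq0 subr_eq0.
by rewrite /chi Bwz1 (negbTE psix) orbF => /eqP.
Qed.

End KSubspace.

Lemma ksub_setT : ksubspace [set: W].
Proof. by split=> [|u v _ _|c u _]; rewrite inE. Qed.

Lemma ksub_orth (M : {set W}) : ksubspace (orth M).
Proof.
split=> [|u v|c u]; rewrite !inE.
- by apply/forall_inP => z _; rewrite B0l.
- move=> /forall_inP Mu /forall_inP Mv; apply/forall_inP => z Mz.
  by rewrite BDl (eqP (Mu z Mz)) (eqP (Mv z Mz)) addr0.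
- move=> /forall_inP Mu; apply/forall_inP => z Mz.
  by rewrite BZl (eqP (Mu z Mz)) mulr0.
Qed.

Lemma ksubI (M N : {set W}) : ksubspace M -> ksubspace N -> ksubspace (M :&: N).
Proof.
move=> hM hN; split=> [|u v|c u]; rewrite !inE ?ksub0 //.
- by move=> /andP[Mu Nu] /andP[Mv Nv]; rewrite !ksubD.
- by move=> /andP[Mu Nu]; rewrite !ksubZ.
Qed.

Lemma orthT : orth [set: W] = [set 0 : W].
Proof.
apply/setP => v; rewrite !inE; apply/forall_inP/eqP => [v0 | -> z _]; last by rewrite B0l.
by apply: B_nondeg => u; rewrite B_anti (eqP (v0 u (in_setT u))) oppr0.
Qed.

Lemma sum_chi_setT z : \sum_(w : W) chi w z = if z == 0 then #|[set: W]|%:R else 0.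
Proof.
transitivity ((\sum_(w in [set: W]) chi z w)^*).
  by rewrite rmorph_sum; apply: eq_big => [w | w _]; rewrite ?inE //= conj_chi.
rewrite (sum_chi_ksub ksub_setT) orthT inE.
by case: eqP; rewrite ?conjC_nat ?conjC0.
Qed.

(* Double counting of the character sum sum_(w, z in M) chi w z. *)
Lemma card_orth (M : {set W}) : ksubspace M -> (#|M| * #|orth M|)%N = #|[set: W]|.
Proof.
move=> hM; apply/eqP; rewrite -(eqr_nat algC) natrM; apply/eqP.
transitivity (\sum_(w : W) \sum_(z in M) chi w z).
  rewrite (eq_bigr _ (fun w _ => sum_chi_ksub hM w)) -big_mkcond /=.
  by rewrite sumr_const mulr_natr.
rewrite exchange_big (eq_bigr _ (fun z _ => sum_chi_setT z)) /=.
rewrite (bigD1 (0 : W)) ?(ksub0 hM) //= eqxx big1 ?addr0 //.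
by move=> z /andP[_ /negbTE ->].
Qed.

Lemma orthK (M : {set W}) : ksubspace M -> orth (orth M) = M.
Proof.
move=> hM; apply/esym/eqP; rewrite eqEcard; apply/andP; split.
  apply/subsetP => u Mu; rewrite inE; apply/forall_inP => v.
  by rewrite inE => /forall_inP/(_ u Mu); rewrite B_anti oppr_eq0.
have orth_gt0 : (0 < #|orth M|)%N.
  by apply/card_gt0P; exists 0; apply: ksub0 (ksub_orth M).
have := card_orth (ksub_orth M); rewrite -(card_orth hM) mulnC.
by move/eqP; rewrite eqn_pmul2r // => /eqP ->.
Qed.

Lemma mem_sumset (M N : {set W}) u v : u \in M -> v \in N -> u + v \in sumset M N.
Proof. by move=> Mu Nv; rewrite inE; apply/existsP; exists (u, v); rewrite /= Mu Nv eqxx. Qed.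

Lemma sumsetP (M N : {set W}) z :
  reflect (exists2 u, u \in M & exists2 v, v \in N & z = u + v) (z \in sumset M N).
Proof.
apply: (iffP idP) => [| [u Mu [v Nv ->]]]; last exact: mem_sumset.
by rewrite inE => /existsP[[u v] /and3P[/= Mu Nv /eqP ->]]; exists u => //; exists v.
Qed.

Lemma ksub_sumset (M N : {set W}) : ksubspace M -> ksubspace N -> ksubspace (sumset M N).
Proof.
move=> hM hN; split=> [|z z'|c z].
- by rewrite -[0]addr0 mem_sumset ?ksub0.
- move=> /sumsetP[u Mu [v Nv ->]] /sumsetP[u' Mu' [v' Nv' ->]].
  by rewrite addrACA mem_sumset ?ksubD.
- by move=> /sumsetP[u Mu [v Nv ->]]; rewrite kscaleD mem_sumset ?ksubZ.
Qed.

Lemma orth_sumset (M N : {set W}) :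
  0 \in M -> 0 \in N -> orth (sumset M N) = orth M :&: orth N.
Proof.
move=> M0 N0; apply/setP => w; rewrite !inE.
apply/forall_inP/andP => [wMN | [/forall_inP wM /forall_inP wN]].
  split; apply/forall_inP => z z_in; apply: wMN.
    by rewrite -[z]addr0 mem_sumset.
  by rewrite -[z]add0r mem_sumset.
by move=> _ /sumsetP[u Mu [v Nv ->]]; rewrite BDr (eqP (wM u Mu)) (eqP (wN v Nv)) addr0.
Qed.

Section Lagrangian.
Variable L : {set W}.
Hypothesis hL : lagrangian L.

Lemma orth_lagrangian : orth L = L.
Proof. by case/andP: hL => _ /eqP <-. Qed.

Lemma lagrangian_ksub : ksubspace L.
Proof. by rewrite -orth_lagrangian; apply: ksub_orth. Qed.

Lemma lagrangian_isotropic u v : u \in L -> v \in L -> B u v = 0.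
Proof. by rewrite -{1}orth_lagrangian inE => /forall_inP uL vL; apply/eqP/uL. Qed.

Lemma card_lagrangian : (#|L| * #|L|)%N = #|[set: W]|.
Proof. by rewrite -{2}orth_lagrangian (card_orth lagrangian_ksub). Qed.

End Lagrangian.

Lemma card_lagrangian_eq (L L' : {set W}) : lagrangian L -> lagrangian L' -> #|L| = #|L'|.
Proof.
by move=> hL hL'; apply/eqP; rewrite -eqn_sqr -!mulnn !card_lagrangian.
Qed.

Lemma orth_lagrangianI (L L' : {set W}) :
  lagrangian L -> lagrangian L' -> orth (L :&: L') = sumset L L'.
Proof.
move=> hL hL'; have [kL kL'] := (lagrangian_ksub hL, lagrangian_ksub hL').
rewrite -{1}(orth_lagrangian hL) -{1}(orth_lagrangian hL') -orth_sumset ?ksub0 //.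
by rewrite (orthK (ksub_sumset kL kL')).
Qed.

Lemma card_translate (M N : {set W}) z : ksubspace M -> ksubspace N ->
  #|[set v in N | z + v \in M]| = if z \in sumset M N then #|M :&: N| else 0%N.
Proof.
move=> hM hN; case: ifPn => [/sumsetP[u Mu [v0 Nv0 ->]] | zMN].
  rewrite -[RHS](card_preimset _ (addIr v0)); apply: eq_card => v.
  rewrite !inE (ksubDr hN _ Nv0) -addrA (addrC u) (ksubDr hM _ Mu).
  by rewrite (addrC v0) andbC.
apply/eqP; rewrite cards_eq0; apply/eqP/setP => v; rewrite !inE.
apply/negbTE; apply: contra zMN => /andP[Nv zvM].
by rewrite -(addrK v z) mem_sumset ?ksubN.
Qed.

Lemma sum_sumset (M N : {set W}) (G : W -> algC) : ksubspace M -> ksubspace N ->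
  \sum_(u in M) \sum_(v in N) G (u + v) = #|M :&: N|%:R * \sum_(z in sumset M N) G z.
Proof.
move=> hM hN; rewrite exchange_big /= [LHS](reindex_inj (@oppr_inj W)) /=.
transitivity (\sum_(v in N) \sum_(z : W | z + v \in M) G z).
  apply: eq_big => [v | v _]; first exact: ksubN.
  by rewrite (reindex_inj (addIr v)) /=; apply: eq_bigr => z _; rewrite addrK.
rewrite (exchange_big_dep predT) //= big_distrr [RHS]big_mkcond /=; apply: eq_bigr => z _.
rewrite (eq_bigl (mem [set v in N | z + v \in M])) => [|v]; last by rewrite !inE andbC.
by rewrite sumr_const card_translate //; case: ifP; rewrite ?mulr_natl.
Qed.

Lemma natr_card_lagrangianI_gt0 (L L' : {set W}) :
  lagrangian L -> lagrangian L' -> 0 < #|L :&: L'|%:R :> algC.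
Proof. by move=> hL hL'; apply/natr_card_ksub_gt0/ksubI; apply: lagrangian_ksub. Qed.

(** * The operators gamma *)

Definition gamma_sum (L' : {set W}) (f : W -> algC) (w : W) : algC :=
  \sum_(z in L') (chi w z)^* * f (w + z).

Lemma gammaE L' L f w :
  gamma L' L f w = (sqrtC (#|L| * #|L :&: L'|)%:R)^-1 * gamma_sum L' f w.
Proof. by []. Qed.

Lemma gamma_in_EL L L' f : lagrangian L' -> in_EL L' (gamma L' L f).
Proof.
move=> hL' w z0 L'z0; rewrite !gammaE mulrCA; congr (_ * _).
rewrite /gamma_sum big_distrr [RHS](reindex_inj (addIr z0)) /=.
apply: eq_big => [z | z L'z]; first by rewrite (ksubDr (lagrangian_ksub hL')).
rewrite (addrC z z0) addrA !mulrA; congr (_ * _).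
rewrite /chi !conj_psi -!psiD; congr psi.
rewrite !(BDl, BDr) (lagrangian_isotropic hL' L'z0 L'z); ring.
Qed.

Lemma gamma_id L f : lagrangian L -> in_EL L f -> gamma L L f =1 f.
Proof.
move=> hL hf w; rewrite gammaE /gamma_sum setIid (eq_bigr (fun=> f w)) => [|z Lz].
  rewrite sumr_const -(mulr_natl (f w)) mulrA natrM -expr2 sqrCK ?ler0n //.
  by rewrite mulVf ?mul1r // (lt0r_neq0 (natr_card_ksub_gt0 (lagrangian_ksub hL))).
by rewrite hf // mulrA conj_chiK mul1r.
Qed.

Lemma ipC (f h : W -> algC) : ip f h = (ip h f)^*.
Proof.
by rewrite /ip rmorph_sum; apply: eq_bigr => w _; rewrite /= rmorphM /= conjCK mulrC.
Qed.

Lemma ip_gammal L L' f h : lagrangian L' -> in_EL L' h ->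
  ip (gamma L' L f) h = (sqrtC (#|L| * #|L :&: L'|)%:R)^-1 * #|L'|%:R * ip f h.
Proof.
move=> hL' hh; rewrite /ip -mulrA.
under eq_bigr do rewrite gammaE -mulrA.
rewrite -big_distrr; congr (_ * _).
transitivity (\sum_(z in L') \sum_w f w * (h w)^*); last by rewrite sumr_const mulr_natl.
rewrite /gamma_sum; under eq_bigr do rewrite big_distrl.
rewrite exchange_big /=; apply: eq_bigr => z L'z.
rewrite [RHS](reindex_inj (addIr z)); apply: eq_bigr => w _ /=.
by rewrite hh // rmorphM /= mulrCA mulrA.
Qed.

Lemma gamma_adjoint L L' f h : lagrangian L -> lagrangian L' -> in_EL L f -> in_EL L' h ->
  ip (gamma L' L f) h = ip f (gamma L L' h).
Proof.
move=> hL hL' hf hh; rewrite ip_gammal // [RHS]ipC ip_gammal // !rmorphM /= -ipC.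
rewrite conjC_nat geC0_conj ?invr_ge0 ?sqrtC_ge0 ?mulr_ge0 ?ler0n //.
by rewrite (card_lagrangian_eq hL hL') setIC.
Qed.

(** * Composition *)

Lemma chi_split_invariant L1 L2 z1 z2 y1 y2 : lagrangian L1 -> lagrangian L2 ->
  z1 \in L1 -> z2 \in L2 -> y1 \in L1 -> y2 \in L2 ->
  z1 + z2 = y1 + y2 -> chi z1 z2 = chi y1 y2.
Proof.
move=> hL1 hL2 L1z1 L2z2 L1y1 L2y2 e.
have [kL1 kL2] := (lagrangian_ksub hL1, lagrangian_ksub hL2).
set d := z1 - y1; have L1d : d \in L1 by rewrite ksubD ?ksubN.
have y2E : y2 = z2 + d by rewrite addrA (addrC z2) e addrAC subrr add0r.
have y1E : y1 = z1 - d by rewrite opprB addrC subrK.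
have L2d : d \in L2 by rewrite -[d](addKr z2) -y2E ksubD ?ksubN.
rewrite y1E y2E /chi BDr !BDl !BNl B_alt (lagrangian_isotropic hL1 L1z1 L1d).
by rewrite (lagrangian_isotropic hL2 L2d L2z2) oppr0 !addr0.
Qed.

Lemma SW_termE L1 L2 u v : lagrangian L1 -> lagrangian L2 -> u \in L1 -> v \in L2 ->
  SW_term L1 L2 (u + v) = chi u v.
Proof.
move=> hL1 hL2 L1u L2v; rewrite /SW_term.
case: pickP => [[u' v'] /= /and3P[L1u' L2v' /eqP e] | no_split].
  exact: (chi_split_invariant hL1 hL2).
by have := no_split (u, v); rewrite /= L1u L2v eqxx.
Qed.

Section Composition.
Hypothesis k_odd : ~~ (2 \in [pchar k]).
Variables (L L1 L2 : {set W}) (f : W -> algC) (w : W).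
Hypotheses (hL : lagrangian L) (hL1 : lagrangian L1) (hL2 : lagrangian L2).
Hypothesis hf : in_EL L f.

Definition slice (a : W) : algC :=
  \sum_(b in L2) (chi w (a + b))^* * chi a b * f (w + (a + b)).

Lemma gamma_comp_slices : gamma L2 L1 (gamma L1 L f) w =
  (sqrtC (#|L1| * #|L1 :&: L2|)%:R)^-1 * (sqrtC (#|L| * #|L :&: L1|)%:R)^-1
  * \sum_(a in L1) slice a.
Proof.
rewrite gammaE /gamma_sum -mulrA; congr (_ * _).
under eq_bigr do rewrite gammaE mulrCA.
rewrite -big_distrr /=; congr (_ * _).
under eq_bigr do rewrite /gamma_sum big_distrr /=.
rewrite exchange_big /=; apply: eq_bigr => a L1a; apply: eq_bigr => b L2b.
by rewrite chiDl chiDr !rmorphM /= (conj_chi b a) (addrC a b) addrA; ring.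
Qed.

Lemma slice_shift a d : d \in L :&: L2 -> slice a = chi (a + a) d * slice a.
Proof.
rewrite inE => /andP[Ld L2d]; have kL2 := lagrangian_ksub hL2.
rewrite /slice big_distrr [LHS](reindex_inj (addIr d)) /=.
apply: eq_big => [b | b]; first by rewrite (ksubDr kL2 _ L2d).
rewrite (ksubDr kL2 _ L2d) => L2b; rewrite !addrA hf // !mulrA; congr (_ * _).
rewrite /chi !conj_psi -!psiD; congr psi.
rewrite !(BDl, BDr) (lagrangian_isotropic hL2 L2b L2d); ring.
Qed.

Lemma slice_split a b : b \in L2 -> a + b \in L -> slice a = chi a b * gamma_sum L2 f w.
Proof.
move=> L2b abL; have kL2 := lagrangian_ksub hL2.
rewrite /slice /gamma_sum big_distrr [LHS](reindex_inj (addIr b)) /=.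
apply: eq_big => [y | y]; first by rewrite (ksubDr kL2 _ L2b).
rewrite (ksubDr kL2 _ L2b) => L2y.
rewrite (addrCA a y b) (addrA w y) (hf (w + y) abL) !mulrA; congr (_ * _).
rewrite /chi !conj_psi -!psiD; congr psi.
rewrite !(BDl, BDr) (B_anti a y) (lagrangian_isotropic hL2 L2y L2b); ring.
Qed.

(* Averaging slice_shift over L :&: L2 multiplies the slice by a character sum,
   which vanishes unless 2a, hence a, lies in orth (L :&: L2) = sumset L L2. *)
Lemma slice_eq0 a : a \notin sumset L L2 -> slice a = 0.
Proof.
move=> aLL2; have two_neq0 : (2%:R : k) != 0 by move: k_odd; rewrite inE.
apply: (mulfI (lt0r_neq0 (natr_card_lagrangianI_gt0 hL hL2))); rewrite mulr0.
transitivity (\sum_(d in L :&: L2) slice a); first by rewrite sumr_const mulr_natl.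
rewrite (eq_bigr _ (fun d => slice_shift a (d:=d))) -big_distrl /=.
rewrite (sum_chi_ksub (ksubI (lagrangian_ksub hL) (lagrangian_ksub hL2))) ifN ?mul0r //.
apply: contra aLL2; rewrite -orth_lagrangianI // !inE => /forall_inP aa0.
apply/forall_inP => d Ld; have := aa0 d Ld.
by rewrite BDl -mulr2n -mulr_natl mulf_eq0 (negbTE two_neq0).
Qed.

Lemma card_mul_slice a :
  #|L :&: L2|%:R * slice a = \sum_(b in L2 | a + b \in L) chi a b * gamma_sum L2 f w.
Proof.
rewrite (eq_bigr (fun=> slice a)) => [|b /andP[L2b abL]]; last exact: esym (slice_split L2b abL).
rewrite (eq_bigl [in [set b in L2 | a + b \in L]]) => [|b]; last by rewrite inE.
rewrite sumr_const (card_translate _ (lagrangian_ksub hL) (lagrangian_ksub hL2)).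
by case: ifPn => [_ | /slice_eq0 ->]; rewrite mulr_natl ?mul0rn.
Qed.

Lemma sum_slices :
  #|L :&: L2|%:R * \sum_(a in L1) slice a = #|L1 :&: L2|%:R * SW L L1 L2 * gamma_sum L2 f w.
Proof.
rewrite big_distrr /= (eq_bigr _ (fun a _ => card_mul_slice a)).
under eq_bigr do rewrite -big_distrl /=.
rewrite -big_distrl /=; congr (_ * _).
transitivity (\sum_(a in L1) \sum_(b in L2) (if a + b \in L then SW_term L1 L2 (a + b) else 0)).
  apply: eq_bigr => a L1a; rewrite big_mkcondr; apply: eq_bigr => b L2b.
  by case: ifP => // _; rewrite SW_termE.
rewrite (sum_sumset (fun z => if z \in L then SW_term L1 L2 z else 0)
  (lagrangian_ksub hL1) (lagrangian_ksub hL2)).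
rewrite -big_mkcondr /SW; congr (_ * _).
by apply: eq_bigl => z; rewrite [RHS]inE andbC.
Qed.

End Composition.

Lemma gamma_comp L L1 L2 f w : ~~ (2 \in [pchar k]) ->
  lagrangian L -> lagrangian L1 -> lagrangian L2 -> in_EL L f ->
  gamma L2 L1 (gamma L1 L f) w = mu L2 L1 L * gamma L2 L f w.
Proof.
move=> k_odd hL hL1 hL2 hf; rewrite gamma_comp_slices.
have n02_neq0 := lt0r_neq0 (natr_card_lagrangianI_gt0 hL hL2).
have -> : \sum_(a in L1) slice L2 f w a
    = #|L1 :&: L2|%:R / #|L :&: L2|%:R * SW L L1 L2 * gamma_sum L2 f w.
  apply: (mulfI n02_neq0); rewrite sum_slices //; field; exact: n02_neq0.
rewrite /mu gammaE (card_lagrangian_eq hL1 hL) (setIC L2 L1) (setIC L1 L) !natrM.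
set N := #|L|%:R; set a := #|L1 :&: L2|%:R; set b := #|L :&: L1|%:R.
set c := #|L :&: L2|%:R; set x := SW L L1 L2; set R := gamma_sum L2 f w.
transitivity ((sqrtC (N * a))^-1 * (sqrtC (N * b))^-1 * (a / c) * (x * R)); first by ring.
rewrite sqrtC_normalization; first by ring.
- exact: natr_card_ksub_gt0 (lagrangian_ksub hL).
- exact: natr_card_lagrangianI_gt0 hL1 hL2.
- exact: natr_card_lagrangianI_gt0 hL hL1.
- exact: natr_card_lagrangianI_gt0 hL hL2.
Qed.

Lemma mu_self L L' : lagrangian L -> lagrangian L' -> mu L L' L = 1.
Proof.
move=> hL hL'; have L_ksub := lagrangian_ksub hL.
rewrite /mu setIid (setIC L' L) !natrM.
have -> : SW L L' L = #|L|%:R.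
  rewrite /SW; have -> : L :&: sumset L' L = L.
    by apply/setIidPl/subsetP => z Lz; rewrite -[z]add0r mem_sumset ?(ksub0 (lagrangian_ksub hL')).
  rewrite -sumr_const; apply: eq_bigr => z Lz.
  by rewrite -[z]add0r SW_termE ?(ksub0 (lagrangian_ksub hL')) // chi_eq1 ?B0l.
have N_neq0 := lt0r_neq0 (natr_card_ksub_gt0 L_ksub).
have n_neq0 := lt0r_neq0 (natr_card_lagrangianI_gt0 hL hL').
have -> : #|L :&: L'|%:R / (#|L|%:R * #|L :&: L'|%:R * #|L|%:R) = (#|L|%:R^-1)^+2 :> algC.
  by field; rewrite N_neq0 n_neq0.
by rewrite sqrCK ?invr_ge0 ?ler0n // mulVf.
Qed.

Lemma gamma_comp_inv L L' f : ~~ (2 \in [pchar k]) ->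
  lagrangian L -> lagrangian L' -> in_EL L f -> gamma L L' (gamma L' L f) =1 f.
Proof.
by move=> k_odd hL hL' hf w; rewrite gamma_comp // mu_self // mul1r gamma_id.
Qed.

Lemma gamma_isometry L L' f h : ~~ (2 \in [pchar k]) ->
  lagrangian L -> lagrangian L' -> in_EL L f -> in_EL L h ->
  ip (gamma L' L f) (gamma L' L h) = ip f h.
Proof.
move=> k_odd hL hL' hf hh; rewrite gamma_adjoint //; last exact: gamma_in_EL.
by apply: eq_bigr => w _; rewrite (gamma_comp_inv k_odd hL hL' hh).
Qed.

(** * Equivariance *)

Lemma gamma_equivariant (g ginv : W -> W) L L' f :
  cancel g ginv -> {morph ginv : u v / u + v} -> (forall u z, B (ginv u) z = B u (g z)) ->
  tau ginv (gamma L' L f) =1 gamma (g @: L') (g @: L) (tau ginv f).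
Proof.
move=> gK ginvD ginv_adj w; have g_inj := can_inj gK.
rewrite /tau !gammaE -imsetI => [|x y _ _ /g_inj //].
rewrite !card_imset // /gamma_sum big_imset => [|x y _ _ /g_inj //] /=.
by congr (_ * _); apply: eq_bigr => z _; rewrite ginvD gK /chi ginv_adj.
Qed.

Lemma matLD a b c d : {morph matL a b c d : u v / u + v}.
Proof. by case=> s t [s' t']; rewrite /matL /= !scalerDr; congr (_, _); apply: addrACA. Qed.

Lemma B_matL a b c d u z :
  B (matL (star d) (- star b) (- star c) (star a) u) z = B u (matL a b c d z).
Proof.
case: u z => [s t] [x y]; rewrite /B /matL /= !etaDl !etaDr -!starN !eta_balanced.
by rewrite !scaleNr !etaNr; ring.
Qed.

Lemma det_star a b c d : star a * d - star c * b = 1 -> star d * a - star b * c = 1.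
Proof. by move=> ad_bc; rewrite -star1 -ad_bc starD starN !starM !starK. Qed.

Lemma matLK a b c d : star d * b = star b * d -> star a * c = star c * a ->
  star a * d - star c * b = 1 ->
  cancel (matL a b c d) (matL (star d) (- star b) (- star c) (star a)).
Proof.
move=> db_sym ac_sym ad_bc [s t]; have da_bc := det_star ad_bc.
rewrite /matL /= !scalerDr !scalerA; congr (_, _); rewrite addrACA -!scalerDl !mulNr.
  by rewrite da_bc db_sym subrr scale1r scale0r addr0.
by rewrite ac_sym addNr scale0r add0r addrC ad_bc scale1r.
Qed.

Lemma act1K g : SLstar star g -> cancel (act1 g) (act1inv g).
Proof. by case=> _ _ ac_sym bd_sym [_ ad_bc]; apply: matLK (esym bd_sym) ac_sym ad_bc. Qed.

Lemma equivariant_act1 : equivariant star eta psi act1 act1inv.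
Proof.
move=> _ g hg L L' _ _ f _; apply: gamma_equivariant (act1K hg) _ _ => [u v|u z].
  exact: matLD.
exact: B_matL.
Qed.

Lemma act2E g : act2 g =1 matL (m22 g) (- m21 g) (- m12 g) (m11 g).
Proof. by move=> w; rewrite /act2 /matR /matL !starN !starK !scaleNr. Qed.

Lemma act2invE g :
  act2inv g =1 matL (star (m11 g)) (- star (- m21 g)) (- star (- m12 g)) (star (m22 g)).
Proof. by move=> w; rewrite /act2inv /matR /matL !starN !opprK. Qed.

Lemma act2K g : SLstar star g -> cancel (act2 g) (act2inv g).
Proof.
case=> _ _ ac_sym bd_sym [_ ad_bc] w; rewrite act2E act2invE.
by apply: matLK; rewrite !starN ?mulrN ?mulNr ?opprK ?ac_sym ?bd_sym // det_star.
Qed.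

Lemma equivariant_act2 : equivariant star eta psi act2 act2inv.
Proof.
move=> _ g hg L L' _ _ f _; apply: gamma_equivariant (act2K hg) _ _ => [u v|u z].
  by rewrite !act2invE matLD.
by rewrite act2invE act2E B_matL.
Qed.

End WeilConnection.

Theorem mainTheorem3
  (k : finFieldType) (A : finAlgType k) (star : A -> A)
  (S : finLmodType A) (eta : S -> S -> k) (psi : k -> algC)
  (k_odd : ~~ (2 \in [pchar k]))
  (Hstar : is_involution star)
  (Heta : self_dual star eta)
  (Hpsi : nontrivial_character psi) :
  (forall L L' : {set W S}, lagrangian star eta L -> lagrangian star eta L' ->
     forall f, in_EL eta psi L f -> in_EL eta psi L' (gamma eta psi L' L f))
  (* (a) *)
  /\ (forall L L' : {set W S}, lagrangian star eta L -> lagrangian star eta L' ->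
     forall f h, in_EL eta psi L f -> in_EL eta psi L' h ->
       ip (gamma eta psi L' L f) h = ip f (gamma eta psi L L' h))
  (* (b) *)
  /\ (forall L L' : {set W S}, lagrangian star eta L -> lagrangian star eta L' ->
     forall f h, in_EL eta psi L f -> in_EL eta psi L h ->
       ip (gamma eta psi L' L f) (gamma eta psi L' L h) = ip f h)
  (* (c) *)
  /\ (forall L L' : {set W S}, lagrangian star eta L -> lagrangian star eta L' ->
     forall f, in_EL eta psi L f ->
       (forall w, gamma eta psi L L' (gamma eta psi L' L f) w = gamma eta psi L L f w)
       /\ (forall w, gamma eta psi L L f w = f w))
  (* well-definedness of the summand of S_W(L; L', L'') *)
  /\ (forall L L' L'' : {set W S},
     lagrangian star eta L -> lagrangian star eta L' -> lagrangian star eta L'' ->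
     forall z1 z2 y1 y2 : W S, z1 \in L' -> z2 \in L'' -> y1 \in L' -> y2 \in L'' ->
       z1 + z2 = y1 + y2 -> chi eta psi z1 z2 = chi eta psi y1 y2)
  (* (d) *)
  /\ (forall L L' L'' : {set W S},
     lagrangian star eta L -> lagrangian star eta L' -> lagrangian star eta L'' ->
     forall f, in_EL eta psi L f ->
     forall w, gamma eta psi L'' L' (gamma eta psi L' L f) w
               = mu eta psi L'' L' L * gamma eta psi L'' L f w)
  (* (e), for each of the two conventions for the action of G on W *)
  /\ equivariant star eta psi (@act1 _ _ S) (@act1inv _ _ star S)
  /\ equivariant star eta psi (@act2 _ _ star S) (@act2inv _ _ star S).
Proof.
split; first by move=> L L' _ hL' f _; apply: (gamma_in_EL Heta Hpsi L f hL').
split; first by move=> L L' hL hL' f h hf hh; apply: (gamma_adjoint Heta Hpsi hL hL' hf hh).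
split; first by move=> L L' hL hL' f h hf hh; apply: (gamma_isometry Heta Hpsi k_odd hL hL' hf hh).
split.
  move=> L L' hL hL' f hf; split=> w; last exact: (gamma_id Heta Hpsi hL hf).
  by rewrite (gamma_comp_inv Heta Hpsi k_odd hL hL' hf) (gamma_id Heta Hpsi hL hf).
split; first by move=> L L' L'' _ hL' hL'' *; apply: (chi_split_invariant psi Heta hL' hL'').
split; first by move=> L L' L'' hL hL' hL'' f hf w; apply: (gamma_comp Heta Hpsi w k_odd hL hL' hL'' hf).
by split; [apply: (equivariant_act1 Hstar Heta) | apply: (equivariant_act2 Hstar Heta)].
Qed.
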